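(* Let $H$ be a set of at least two pairwise disjoint line segments in the plane, $s\in H$, and $x$ a point of the farthest Voronoi region $V_f(s,H)$. Let $p\in s$ be the point with $d(p,x)=d(s,x)$ and let $r(s,x)$ be the ray emanating from $p$, passing through $x$ and extending to infinity. Then $r(s,x)$ intersects the boundary of $V_f(s,H)$ at a point $a_x$ (lying on the segment from $p$ to $x$), and the unbounded portion of $r(s,x)$ beyond $a_x$ lies entirely in $V_f(s,H)$.
   Context: Distances are Euclidean: $d(x,s)=\min_{q\in s}d(x,q)$. The farthest Voronoi region is $V_f(s,H)=\{x: d(x,s)>d(x,t)\ \forall t\in H\setminus\{s\}\}$. *)

From Stdlib Require Import Reals Lra List ClassicalEpsilon.
Open Scope R_scope.

Definition point : Type := (R * R)%type.

Definition edist (x y : point) : R :=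
  sqrt ((fst x - fst y) ^ 2 + (snd x - snd y) ^ 2).

Definition segment : Type := (point * point)%type.

Definition on_seg (q : point) (s : segment) : Prop :=
  exists l : R, 0 <= l <= 1 /\
    q = ((1 - l) * fst (fst s) + l * fst (snd s),
         (1 - l) * snd (fst s) + l * snd (snd s)).

Definition is_min_dist (x : point) (s : segment) (r : R) : Prop :=
  (exists q, on_seg q s /\ edist x q = r) /\
  (forall q, on_seg q s -> r <= edist x q).

(* d(x,s) = min_{q in s} d(x,q)  (the minimum exists, segments being compact). *)
Definition seg_dist (x : point) (s : segment) : R :=
  epsilon (inhabits 0) (fun r => is_min_dist x s r).

Definition Vf (s : segment) (H : list segment) (x : point) : Prop :=
  forall t, In t H -> t <> s -> seg_dist x s > seg_dist x t.

Definition on_boundary (A : point -> Prop) (z : point) : Prop :=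
  forall eps, eps > 0 ->
    (exists y, edist z y < eps /\ A y) /\ (exists y, edist z y < eps /\ ~ A y).

Definition ray_pt (p x : point) (t : R) : point :=
  (fst p + t * (fst x - fst p), snd p + t * (snd x - snd p)).

Definition pairwise_disjoint (H : list segment) : Prop :=
  forall s1 s2, In s1 H -> In s2 H -> s1 <> s2 ->
    forall q, ~ (on_seg q s1 /\ on_seg q s2).

(* The distance to [s] grows along the ray at least linearly, with slope
   [d(p,x)]: shrinking a nearest point of [s] towards [p] by the factor [1/t]
   gives a point of [s] whose distance to [x] is [1/t] of the original one.
   The distance to any other segment is 1-Lipschitz, so past [x] the gap in
   favour of [s] only widens and the ray stays in [V_f(s,H)].  At [p] itself
   the distance to [s] is [0], so [p] is not in the region; the supremum of
   the parameters of points of the segment [px] outside the region is the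
   boundary point [a_x]. *)
From Stdlib Require Import Reals List.
From Stdlib Require Import Lra Lia Rgeom Classical ClassicalEpsilon.
Open Scope R_scope.

Lemma edist_ge0 (u v : point) : 0 <= edist u v.
Proof. apply sqrt_pos. Qed.

Lemma edist_dist_euc (u v : point) :
  edist u v = dist_euc (fst u) (snd u) (fst v) (snd v).
Proof. unfold edist, dist_euc; rewrite !Rsqr_pow2; reflexivity. Qed.

Lemma edist_triangle (u v w : point) : edist u w <= edist u v + edist v w.
Proof. rewrite !edist_dist_euc; apply triangle. Qed.

Lemma edist_scale (u v w z : point) (k : R) :
  fst u - fst v = k * (fst w - fst z) -> snd u - snd v = k * (snd w - snd z) ->
  edist u v = Rabs k * edist w z.
Proof.
  intros E1 E2; unfold edist; rewrite E1, E2.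
  replace ((k * (fst w - fst z)) ^ 2 + (k * (snd w - snd z)) ^ 2)
    with (k ^ 2 * ((fst w - fst z) ^ 2 + (snd w - snd z) ^ 2)) by ring.
  rewrite sqrt_mult_alt by apply pow2_ge_0.
  rewrite <- Rsqr_pow2, sqrt_Rsqr_abs; reflexivity.
Qed.

Lemma edist_ray_pt (p x : point) (a b : R) :
  edist (ray_pt p x a) (ray_pt p x b) = Rabs (b - a) * edist p x.
Proof. apply edist_scale; unfold ray_pt; simpl; ring. Qed.

Lemma quadratic_argmin_unit (B C : R) : 0 <= C ->
  exists m, 0 <= m <= 1 /\
    forall l, 0 <= l <= 1 -> - 2 * m * B + m ^ 2 * C <= - 2 * l * B + l ^ 2 * C.
Proof.
  intros HC.
  destruct (Rle_dec B 0) as [HB0 | HB0].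
  - exists 0; split; [lra |]; intros l Hl.
    assert (0 <= l ^ 2 * C) by (apply Rmult_le_pos; [apply pow2_ge_0 | lra]).
    assert (0 <= l * - B) by (apply Rmult_le_pos; lra).
    lra.
  - destruct (Rle_dec C B) as [HCB | HCB].
    + exists 1; split; [lra |]; intros l Hl.
      assert (0 <= (1 - l) * (2 * B - (1 + l) * C)) by (apply Rmult_le_pos; nra).
      nra.
    + (* interior case: the vertex [B / C] of the parabola lies in [0,1] *)
      exists (B / C); split.
      * split; [apply Rmult_le_pos; [lra | apply Rlt_le, Rinv_0_lt_compat; lra] |].
        apply Rmult_le_reg_r with C; [lra |].
        unfold Rdiv; rewrite Rmult_assoc, Rinv_l by lra; lra.
      * intros l _.
        assert (0 <= C * (l - B / C) ^ 2) by (apply Rmult_le_pos; [lra | apply pow2_ge_0]).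
        replace (- 2 * l * B + l ^ 2 * C)
          with (- 2 * (B / C) * B + (B / C) ^ 2 * C + C * (l - B / C) ^ 2)
          by (field; lra).
        lra.
Qed.

Lemma is_min_dist_exists (x : point) (s : segment) : exists r, is_min_dist x s r.
Proof.
  destruct s as [[a1 a2] [b1 b2]], x as [x1 x2].
  set (B := (x1 - a1) * (b1 - a1) + (x2 - a2) * (b2 - a2)).
  set (C := (b1 - a1) ^ 2 + (b2 - a2) ^ 2).
  set (A := (x1 - a1) ^ 2 + (x2 - a2) ^ 2).
  set (q l := ((1 - l) * a1 + l * b1, (1 - l) * a2 + l * b2)).
  assert (Hq : forall l, edist (x1, x2) (q l) = sqrt (A - 2 * l * B + l ^ 2 * C)).
  { intros l; unfold edist, q, A, B, C; simpl; f_equal; ring. }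
  assert (HC : 0 <= C) by (unfold C; pose proof (pow2_ge_0 (b1 - a1));
                            pose proof (pow2_ge_0 (b2 - a2)); lra).
  destruct (quadratic_argmin_unit B C HC) as [m [Hm Hmin]].
  exists (edist (x1, x2) (q m)); split.
  - exists (q m); split; [exists m; split; [exact Hm | reflexivity] | reflexivity].
  - intros q' [l [Hl ->]].
    change (edist (x1, x2) (q m) <= edist (x1, x2) (q l)).
    rewrite !Hq; apply sqrt_le_1_alt.
    specialize (Hmin l Hl); lra.
Qed.

Lemma seg_distP (x : point) (s : segment) : is_min_dist x s (seg_dist x s).
Proof. unfold seg_dist; apply epsilon_spec, is_min_dist_exists. Qed.

Lemma seg_dist_le (x q : point) (s : segment) :
  on_seg q s -> seg_dist x s <= edist x q.
Proof. apply (proj2 (seg_distP x s)). Qed.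

Lemma seg_dist_attained (x : point) (s : segment) :
  exists q, on_seg q s /\ edist x q = seg_dist x s.
Proof. exact (proj1 (seg_distP x s)). Qed.

Lemma seg_dist_ge0 (x : point) (s : segment) : 0 <= seg_dist x s.
Proof.
  destruct (seg_dist_attained x s) as [q [_ <-]]; apply edist_ge0.
Qed.

Lemma seg_dist_lipschitz (x y : point) (s : segment) :
  seg_dist y s <= edist y x + seg_dist x s.
Proof.
  destruct (seg_dist_attained x s) as [q [Hq <-]].
  eapply Rle_trans; [apply (seg_dist_le y q s Hq) | apply edist_triangle].
Qed.

Lemma on_seg_comb (s : segment) (p q : point) (k : R) :
  on_seg p s -> on_seg q s -> 0 <= k <= 1 ->
  on_seg ((1 - k) * fst p + k * fst q, (1 - k) * snd p + k * snd q) s.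
Proof.
  intros [lp [Hlp ->]] [lq [Hlq ->]] Hk.
  exists ((1 - k) * lp + k * lq); split; [nra |].
  simpl; f_equal; ring.
Qed.

Section Ray.

Variables (s : segment) (x p : point).
Hypotheses (Hp : on_seg p s) (Hpx : edist p x = seg_dist x s).

Lemma seg_dist_ray_pt_ge (t : R) : 1 <= t ->
  t * seg_dist x s <= seg_dist (ray_pt p x t) s.
Proof.
  intros Ht.
  set (y := ray_pt p x t).
  destruct (seg_dist_attained y s) as [q [Hq <-]].
  set (q' := ((1 - / t) * fst p + / t * fst q, (1 - / t) * snd p + / t * snd q)).
  assert (Hinv : 0 < / t <= 1).
  { split; [apply Rinv_0_lt_compat; lra |].
    rewrite <- Rinv_1; apply Rinv_le_contravar; lra. }
  assert (Hq' : on_seg q' s) by (apply on_seg_comb; assumption || lra).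
  assert (Exq' : edist x q' = / t * edist y q).
  { rewrite (edist_scale x q' y q (/ t)), Rabs_right by
      (lra || (unfold q', y, ray_pt; simpl; field; lra)).
    reflexivity. }
  pose proof (seg_dist_le x q' s Hq') as Hle.
  rewrite Exq' in Hle.
  apply Rmult_le_compat_l with (r := t) in Hle; [| lra].
  rewrite <- Rmult_assoc, Rinv_r, Rmult_1_l in Hle by lra.
  exact Hle.
Qed.

Lemma Vf_ray_pt (H : list segment) (t : R) :
  Vf s H x -> 1 <= t -> Vf s H (ray_pt p x t).
Proof.
  intros Hx Ht u Hu Hus.
  pose proof (seg_dist_ray_pt_ge t Ht) as Hs.
  pose proof (seg_dist_lipschitz x (ray_pt p x t) u) as Hu'.
  assert (Hyx : edist (ray_pt p x t) x = (t - 1) * seg_dist x s).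
  { rewrite (edist_scale _ _ p x (1 - t)), Rabs_left1, Hpx by
      (lra || (unfold ray_pt; simpl; ring)).
    ring. }
  pose proof (Hx u Hu Hus).
  pose proof (seg_dist_ge0 x s).
  unfold Rgt; nra.
Qed.

End Ray.

Lemma last_exit (P : R -> Prop) :
  ~ P 0 -> (forall t, 1 <= t -> P t) ->
  exists t0, 0 <= t0 <= 1 /\ (forall t, t > t0 -> P t) /\
    (forall d, d > 0 -> exists v, t0 - d < v <= t0 /\ ~ P v).
Proof.
  intros HP0 HP1.
  set (S v := 0 <= v <= 1 /\ ~ P v).
  assert (HS0 : S 0) by (split; [lra | exact HP0]).
  assert (Sbound : bound S) by (exists 1; intros v [Hv _]; lra).
  destruct (completeness S Sbound (ex_intro S 0 HS0)) as [t0 [Hub Hlub]].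
  assert (Ht0 : 0 <= t0 <= 1).
  { split; [apply Hub, HS0 | apply Hlub; intros v [Hv _]; lra]. }
  exists t0; split; [exact Ht0 | split].
  - intros t Ht.
    destruct (Rle_dec 1 t) as [H1 | H1]; [apply HP1, H1 |].
    apply NNPP; intros HnP.
    assert (S t) as HSt by (split; [lra | exact HnP]).
    pose proof (Hub t HSt); lra.
  - intros d Hd; apply NNPP; intros Hno.
    assert (t0 <= t0 - d); [| lra].
    apply Hlub; intros v HSv; apply Rnot_lt_le; intros Hv.
    apply Hno; exists v; split; [split; [exact Hv | apply Hub, HSv] | apply HSv].
Qed.

Lemma on_boundary_ray_pt (A : point -> Prop) (p x : point) (t0 : R) :
  (forall t, t > t0 -> A (ray_pt p x t)) ->
  (forall d, d > 0 -> exists v, t0 - d < v <= t0 /\ ~ A (ray_pt p x v)) ->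
  on_boundary A (ray_pt p x t0).
Proof.
  intros Hin Hout eps Heps.
  set (D := edist p x).
  assert (HD : 0 <= D) by apply edist_ge0.
  set (d := eps / (D + 1)).
  assert (Hd : 0 < d) by (apply Rdiv_lt_0_compat; lra).
  assert (HdD : d * D < eps).
  { assert (d * (D + 1) = eps) by (unfold d; field; lra). nra. }
  split.
  - exists (ray_pt p x (t0 + d)); split; [| apply Hin; lra].
    rewrite edist_ray_pt; fold D.
    replace (t0 + d - t0) with d by ring.
    rewrite Rabs_right by lra; exact HdD.
  - destruct (Hout d Hd) as [v [Hv HnA]].
    exists (ray_pt p x v); split; [| exact HnA].
    rewrite edist_ray_pt; fold D.
    rewrite Rabs_left1 by lra; nra.
Qed.

Lemma NoDup_exists_other {T : Type} (l : list T) (a : T) :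
  NoDup l -> (2 <= length l)%nat -> exists b, In b l /\ b <> a.
Proof.
  intros Hnd Hlen.
  destruct l as [| b [| c l']]; simpl in Hlen; try (exfalso; lia).
  inversion Hnd as [| ? ? Hb _]; subst.
  destruct (classic (b = a)) as [-> | Hba].
  - exists c; split; [simpl; auto |].
    intros ->; apply Hb; simpl; auto.
  - exists b; split; [simpl; auto | exact Hba].
Qed.

Lemma not_Vf_on_seg (s : segment) (H : list segment) (p : point) :
  (exists u, In u H /\ u <> s) -> on_seg p s -> ~ Vf s H p.
Proof.
  intros [u [Hu Hus]] Hp HV.
  pose proof (HV u Hu Hus).
  pose proof (seg_dist_le p p s Hp).
  assert (edist p p = 0) by (rewrite edist_dist_euc; apply distance_refl).
  pose proof (seg_dist_ge0 p u).
  lra.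
Qed.

Theorem lemma6 (H : list segment) (s : segment) (x p : point)
  (HND : NoDup H) (Hlen : (2 <= length H)%nat)
  (Hdisj : pairwise_disjoint H) (Hs : In s H)
  (Hx : Vf s H x)
  (Hp : on_seg p s) (Hpx : edist p x = seg_dist x s) :
  exists t0 : R, 0 <= t0 <= 1 /\
    on_boundary (Vf s H) (ray_pt p x t0) /\
    (forall t, t > t0 -> Vf s H (ray_pt p x t)).
Proof.
  assert (Hp0 : ray_pt p x 0 = p)
    by (unfold ray_pt; destruct p; simpl; f_equal; ring).
  assert (Hout0 : ~ Vf s H (ray_pt p x 0)).
  { rewrite Hp0; exact (not_Vf_on_seg s H p (NoDup_exists_other H s HND Hlen) Hp). }
  destruct (last_exit (fun t => Vf s H (ray_pt p x t)) Hout0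
              (fun t Ht => Vf_ray_pt s x p Hp Hpx H t Hx Ht))
    as [t0 [Ht0 [Hafter Hbefore]]].
  exists t0; split; [exact Ht0 | split; [| exact Hafter]].
  exact (on_boundary_ray_pt (Vf s H) p x t0 Hafter Hbefore).
Qed.
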